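(* Fix $p\in(\tfrac12,1)$. For each $n$ and $B\in\{1,\dots,n\}$ let $\theta(B,n)$ be the correctness index of the crowdfunding game $\Gamma(B,n)$ (defined in the context). Then $$\lim_{n\to\infty}\ \max_{B\in\{1,\dots,n\}}\theta(B,n)=\frac{3p-1}{2p}\ (<1).$$
   Context: The crowdfunding game $\Gamma(B,n)$ with parameter $p\in(\tfrac12,1)$: there are $n$ players and a threshold $B\in\{1,\dots,n\}$. A state $\omega\in\{H,L\}$ is drawn with probability $\tfrac12$ each. Conditional on $\omega$, each player $i$ independently receives a signal $s_i\in\{H,L\}$ with $\Pr(s_i=\omega\mid\omega)=p$. Players simultaneously choose $a_i\in\{0,1\}$. Player $i$'s payoff is $1$ if $a_i=1$, $\sum_j a_j\ge B$ and $\omega=H$; $-1$ if $a_i=1$, $\sum_j a_j\ge B$ and $\omega=L$; and $0$ otherwise. A strategy is a map $\sigma_i:\{H,L\}\to[0,1]$ giving the probability of action $1$ after each signal; Bayes-Nash equilibrium is defined as usual. A profile is non-trivial if $\Pr_\sigma(\sum_i a_i\ge B)>0$, and symmetric if all players use the same strategy. It is known that each $\Gamma(B,n)$ has a unique symmetric non-trivial Bayes-Nash equilibrium $\sigma$. The correctness index is $\theta(B,n)=\tfrac12\Pr_\sigma(\sum_{i}a_i\ge B\mid\omega=H)+\tfrac12\Pr_\sigma(\sum_i a_i<B\mid\omega=L)$, computed under this unique equilibrium $\sigma$. *)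

From HB Require Import structures.
From mathcomp Require Import all_boot all_order all_algebra.
From mathcomp Require Import all_classical all_reals all_analysis.
From Stdlib Require Import ClassicalEpsilon.

Set Implicit Arguments.
Unset Strict Implicit.
Unset Printing Implicit Defensive.

Import Order.TTheory GRing.Theory Num.Theory.
Local Open Scope ring_scope.

(* Conventions: states and signals are booleans, true = H, false = L.
   Actions are booleans, true = action 1 (contribute).
   A strategy is a map bool -> R (probability of action 1 after each signal). *)

Section Crowdfunding.
Variables (R : realType) (p : R) (B n : nat).

Definition strategy_ok (tau : bool -> R) : Prop :=
  forall s : bool, 0 <= tau s <= 1.

Definition profile := 'I_n -> bool -> R.

Definition profile_ok (sigma : profile) : Prop :=
  forall i, strategy_ok (sigma i).

Definition sig_prob (omega s : bool) : R := if s == omega then p else 1 - p.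

Definition act_prob (q : R) (a : bool) : R := if a then q else 1 - q.

Definition weight (sigma : profile) (omega : bool)
    (s a : {ffun 'I_n -> bool}) : R :=
  (1 / 2) * (\prod_i sig_prob omega (s i))
          * (\prod_i act_prob (sigma i (s i)) (a i)).

Definition funded (a : {ffun 'I_n -> bool}) : bool :=
  (B <= \sum_i (a i : nat))%N.

Definition payoff (i : 'I_n) (omega : bool) (a : {ffun 'I_n -> bool}) : R :=
  if a i && funded a then (if omega then 1 else -1) else 0.

Definition expect (sigma : profile)
    (f : bool -> {ffun 'I_n -> bool} -> {ffun 'I_n -> bool} -> R) : R :=
  \sum_(omega : bool) \sum_(s : {ffun 'I_n -> bool})
     \sum_(a : {ffun 'I_n -> bool}) weight sigma omega s a * f omega s a.

Definition exp_payoff (sigma : profile) (i : 'I_n) : R :=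
  expect sigma (fun omega _ a => payoff i omega a).

Definition deviate (sigma : profile) (i : 'I_n) (tau : bool -> R) : profile :=
  fun j => if j == i then tau else sigma j.

Definition is_BNE (sigma : profile) : Prop :=
  profile_ok sigma /\
  forall (i : 'I_n) (tau : bool -> R), strategy_ok tau ->
    exp_payoff (deviate sigma i tau) i <= exp_payoff sigma i.

Definition nontrivial (sigma : profile) : Prop :=
  0 < expect sigma (fun _ _ a => if funded a then 1 else 0).

Definition symmetric_profile (tau : bool -> R) : profile := fun _ => tau.

Definition is_sym_nontrivial_BNE (tau : bool -> R) : Prop :=
  is_BNE (symmetric_profile tau) /\ nontrivial (symmetric_profile tau).

(* theta under a given profile:
   1/2 Pr(funded | H) + 1/2 Pr(not funded | L)
   = Pr(omega = H and funded) + Pr(omega = L and not funded). *)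
Definition theta_of (sigma : profile) : R :=
  expect sigma (fun omega _ a =>
    if omega then (if funded a then 1 else 0)
    else (if funded a then 0 else 1)).

Definition inhabited_strategy : inhabited (bool -> R) := inhabits (fun _ => 0).

(* The (unique, by the known result) symmetric non-trivial BNE. *)
Definition the_equilibrium : bool -> R :=
  epsilon inhabited_strategy is_sym_nontrivial_BNE.

Definition theta : R := theta_of (symmetric_profile the_equilibrium).

End Crowdfunding.

(* max_{B in {1..n}} theta(B, n); equals 0 for n = 0 (irrelevant for the limit). *)
Definition max_theta (R : realType) (p : R) (n : nat) : R :=
  \big[Num.max/0]_(1 <= B < n.+1) theta p B n.

(* In a symmetric profile with threshold [B = b + 1] among [n = m + 1] players,
   contributing after a signal pays off exactly when at least [b] of the other [m]
   players contribute, so every quantity of interest is a binomial tail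
   [T(m, q, b)] in the probabilities [qH], [qL] that an opponent contributes in
   each state.  In a non-trivial equilibrium players contribute after H, and the
   incentive constraint after L reads [(1 - p) T(m, qH, b) <= p T(m, qL, b)]; this
   caps [2 p theta] by [3 p - 1] plus [p] times a single binomial point mass, which
   is [O(1 / sqrt m)].  Conversely, for [b] close to [m / 2], Chernoff bounds give
   [theta >= (3 p - 1) / (2 p) - rho ^ m] with [rho = 1 / 2 + 2 p (1 - p) < 1].
   The equilibrium that [theta] refers to exists by the intermediate value theorem
   applied to the incentive after L of the strategies contributing surely after H. *)

From HB Require Import structures.
From mathcomp Require Import all_boot all_order all_algebra.
From mathcomp Require Import all_classical all_reals all_analysis.
From mathcomp Require Import ring lra zify.
From Stdlib Require Import ClassicalEpsilon.

Set Implicit Arguments.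
Unset Strict Implicit.
Unset Printing Implicit Defensive.

Import Order.TTheory GRing.Theory Num.Theory numFieldNormedType.Exports.
Local Open Scope classical_set_scope.
Local Open Scope ring_scope.

Lemma sum_ord_eq_indicator (R : pzSemiRingType) N (k : nat) (F : nat -> R) :
  \sum_(j < N) (k == j :> nat)%:R * F j = if (k < N)%N then F k else 0.
Proof.
elim: N => [|N IH]; first by rewrite big_ord0.
rewrite big_ord_recr /= IH ltnS.
by case: ltngtP => [||->] /=; rewrite ?mul0r ?addr0 ?mul1r ?add0r.
Qed.

Section BinomialDistribution.
Variable R : realFieldType.
Implicit Types (q z : R) (m k j : nat).

Definition binom_poly q : {poly R} := q%:P * 'X + (1 - q)%:P.

Definition binom_pmf m q k : R := (binom_poly q ^+ m)`_k.

Definition binom_tail m q k : R := \sum_(j < m.+1) (k <= j)%:R * binom_pmf m q j.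

Lemma binom_pmfSS m q k :
  binom_pmf m.+1 q k.+1 = (1 - q) * binom_pmf m q k.+1 + q * binom_pmf m q k.
Proof.
by rewrite /binom_pmf exprS mulrDl coefD -mulrA coefCM coefXM coefCM addrC.
Qed.

Lemma binom_pmfS0 m q : binom_pmf m.+1 q 0 = (1 - q) * binom_pmf m q 0.
Proof.
by rewrite /binom_pmf exprS mulrDl coefD -mulrA coefCM coefXM coefCM /= mulr0 add0r.
Qed.

Lemma binom_pmfE m q k : binom_pmf m q k = 'C(m, k)%:R * q ^+ k * (1 - q) ^+ (m - k).
Proof.
elim: m k => [|m IH] [|k].
- by rewrite /binom_pmf !expr0 coef1 bin0 !mulr1.
- by rewrite /binom_pmf expr0 coef1 bin0n !mul0r.
- by rewrite binom_pmfS0 IH !bin0 !expr0 !subn0 exprS; ring.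
rewrite binom_pmfSS !IH binS natrD subSS.
have [km|mk] := ltnP k m.
  by rewrite -(subnSK km) !exprS; ring.
rewrite bin_small ?ltnS // (eqP (_ : m - k.+1 == 0)%N) ?subn_eq0 ?(leqW mk) //.
by rewrite (eqP (_ : m - k == 0)%N) ?subn_eq0 // exprS; ring.
Qed.

Lemma binom_pmf_ge0 m q k : 0 <= q <= 1 -> 0 <= binom_pmf m q k.
Proof.
by move=> /andP[q0 q1]; rewrite binom_pmfE !mulr_ge0 ?exprn_ge0 ?subr_ge0.
Qed.

Lemma binom_pmf_small m q k : (m < k)%N -> binom_pmf m q k = 0.
Proof. by move=> mk; rewrite binom_pmfE bin_small // !mul0r. Qed.

Lemma binom_pmf_compl m q k : (k <= m)%N -> binom_pmf m q k = binom_pmf m (1 - q) (m - k).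
Proof.
by move=> km; rewrite !binom_pmfE bin_sub // subKn // (_ : 1 - (1 - q) = q); ring.
Qed.

Lemma size_binom_poly_exp m q : (size (binom_poly q ^+ m) <= m.+1)%N.
Proof.
apply: leq_trans (size_poly_exp_leq _ _) _; rewrite ltnS.
have : (size (binom_poly q) <= 2)%N.
  rewrite /binom_poly size_MXaddC; case: ifP => // _.
  by rewrite size_polyC; case: (q != 0).
by case: (size _) => [|[|[|]]] //= _; rewrite ?mul0n ?mul1n.
Qed.

Lemma binom_pgf m q z : \sum_(j < m.+1) binom_pmf m q j * z ^+ j = (q * z + (1 - q)) ^+ m.
Proof.
rewrite -(horner_coef_wide _ (size_binom_poly_exp m q)) horner_exp.
by rewrite /binom_poly hornerD hornerMX !hornerC.
Qed.

Lemma sum_binom_pmf m q : \sum_(j < m.+1) binom_pmf m q j = 1.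
Proof.
have := binom_pgf m q 1; rewrite mulr1 subrKC expr1n => <-.
by apply: eq_bigr => j _; rewrite expr1n mulr1.
Qed.

Lemma binom_tail0 m q : binom_tail m q 0 = 1.
Proof.
by rewrite -(sum_binom_pmf m q); apply: eq_bigr => j _; rewrite mul1r.
Qed.

Lemma binom_tail_split m q k : binom_tail m q k = binom_pmf m q k + binom_tail m q k.+1.
Proof.
have -> : binom_tail m q k = \sum_(j < m.+1)
    ((k == j)%:R * binom_pmf m q j + (k.+1 <= j)%:R * binom_pmf m q j).
  apply: eq_bigr => j _; rewrite -mulrDl leq_eqVlt.
  by case: (ltngtP k j); rewrite ?addr0 ?add0r.
rewrite big_split /= sum_ord_eq_indicator ltnS.
by case: leqP => // mk; rewrite binom_pmf_small.
Qed.

Lemma binom_tailSS m q k :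
  binom_tail m.+1 q k.+1 = q * binom_tail m q k + (1 - q) * binom_tail m q k.+1.
Proof.
have shift : binom_tail m q k.+1 = \sum_(i < m.+1) (k <= i)%:R * binom_pmf m q i.+1.
  rewrite [RHS](_ : _ = \sum_(i < m.+2) (k.+1 <= i)%:R * binom_pmf m q i).
    by rewrite big_ord_recr /= binom_pmf_small // mulr0 addr0.
  by rewrite [RHS]big_ord_recl /= mul0r add0r.
rewrite shift /binom_tail big_ord_recl /= mul0r add0r !mulr_sumr -big_split /=.
by apply: eq_bigr => i _; rewrite binom_pmfSS; ring.
Qed.

Lemma binom_tail_step m q k :
  binom_tail m.+1 q k.+1 = binom_tail m q k - (1 - q) * binom_pmf m q k.
Proof. by rewrite binom_tailSS (binom_tail_split m q k); ring. Qed.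

Lemma binom_tail_ge0 m q k : 0 <= q <= 1 -> 0 <= binom_tail m q k.
Proof. by move=> q01; rewrite sumr_ge0 // => j _; rewrite mulr_ge0 ?binom_pmf_ge0. Qed.

Lemma binom_tail_le1 m q k : 0 <= q <= 1 -> binom_tail m q k <= 1.
Proof.
move=> q01; rewrite -(sum_binom_pmf m q); apply: ler_sum => j _.
by case: (k <= j)%N; rewrite ?mul1r ?mul0r ?binom_pmf_ge0.
Qed.

Lemma binom_tail_stepW m q k : 0 <= q <= 1 -> binom_tail m.+1 q k.+1 <= binom_tail m q k.
Proof.
by move=> q01; rewrite binom_tail_step gerBl mulr_ge0 ?binom_pmf_ge0 // subr_ge0; case/andP: q01.
Qed.

Lemma binom_tail_monotone m k q q' : 0 <= q -> q <= q' -> q' <= 1 ->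
  binom_tail m q k <= binom_tail m q' k.
Proof.
move=> q0 qq' q'1; have q01 : 0 <= q <= 1 by rewrite q0 (le_trans qq').
have q'01 : 0 <= q' <= 1 by rewrite q'1 (le_trans q0).
elim: m k => [|m IH] k; first by rewrite /binom_tail !big_ord1 !binom_pmfE !expr0.
case: k => [|k]; first by rewrite !binom_tail0.
have := IH k; have := IH k.+1; rewrite !binom_tailSS.
have := binom_tail_split m q' k; have := binom_pmf_ge0 m k q'01.
have := binom_tail_ge0 m k.+1 q01; have := binom_tail_ge0 m k.+1 q'01.
nra.
Qed.

Lemma binom_tail_q1 m k : (k <= m)%N -> binom_tail m 1 k = 1.
Proof.
elim: m k => [|m IH] [|k] km //; rewrite ?binom_tail0 //.
by rewrite binom_tailSS IH // subrr mul0r addr0 mul1r.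
Qed.

Lemma binom_tail_q0 m k : binom_tail m 0 k.+1 = 0.
Proof.
elim: m k => [|m IH] k; last by rewrite binom_tailSS IH mul0r add0r mulr0.
by rewrite /binom_tail big_ord1 mul0r.
Qed.

Lemma binom_tail_ge_expr m q k : 0 <= q <= 1 -> (k <= m)%N -> q ^+ m <= binom_tail m q k.
Proof.
move=> q01; elim: m k => [|m IH] [|k] km //; rewrite ?binom_tail0 ?expr0 //.
  by rewrite exprn_ile1 //; case/andP: q01.
rewrite binom_tailSS exprS; have := IH k km.
have := binom_tail_ge0 m k.+1 q01; case/andP: q01; nra.
Qed.

Definition binom_tail_poly m k : {poly R} :=
  \sum_(j < m.+1) (k <= j)%:R *: ('C(m, j)%:R *: ('X ^+ j * (1 - 'X) ^+ (m - j))).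

Lemma horner_binom_tail_poly m k q : (binom_tail_poly m k).[q] = binom_tail m q k.
Proof.
rewrite /binom_tail_poly horner_sum; apply: eq_bigr => j _.
by rewrite binom_pmfE !hornerZ hornerM !horner_exp hornerD hornerN hornerX hornerC !mulrA.
Qed.

Lemma binom_tail_eq0 m q b : (b <= m)%N -> 0 <= q <= 1 ->
  binom_tail m q b = 0 -> q = 0.
Proof.
move=> bm q01 T0; have := binom_tail_ge_expr q01 bm; rewrite T0 => qm.
have /andP[q0 _] := q01; have : q ^+ m == 0 by rewrite eq_le qm exprn_ge0.
by rewrite expf_eq0 => /andP[_ /eqP].
Qed.

Lemma binom_tail_pgf_ub m q k z : 0 <= q <= 1 -> 1 <= z ->
  z ^+ k * binom_tail m q k <= (q * z + (1 - q)) ^+ m.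
Proof.
move=> q01 z1; rewrite -binom_pgf /binom_tail mulr_sumr; apply: ler_sum => j _.
have c0 := binom_pmf_ge0 m j q01.
have [kj|jk] := leqP k j; rewrite ?mul1r ?mul0r ?mulr0 (mulrC (binom_pmf _ _ _)).
  by apply: ler_wpM2r => //; apply: ler_weXn2l.
by rewrite mulr_ge0 // exprn_ge0 // (le_trans ler01).
Qed.

Lemma binom_tail_pgf_lb m q k z : 0 <= q <= 1 -> 0 < z <= 1 ->
  z ^+ k * (1 - binom_tail m q k.+1) <= (q * z + (1 - q)) ^+ m.
Proof.
move=> q01 /andP[z0 z1].
rewrite -binom_pgf -{1}(sum_binom_pmf m q) /binom_tail -sumrB mulr_sumr.
apply: ler_sum => j _; have c0 := binom_pmf_ge0 m j q01.
have [kj|jk] := leqP k.+1 j; rewrite ?mul1r ?mul0r ?subrr ?subr0 ?mulr0 (mulrC (binom_pmf _ _ _)).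
  by rewrite mulr_ge0 // exprn_ge0 // ltW.
by apply: ler_wpM2r => //; apply: ler_wiXn2l => //; rewrite ltW.
Qed.

End BinomialDistribution.

Lemma linear_decay_lb (R : realFieldType) (a : nat -> R) (u : R) t :
  0 <= u <= 1 -> 0 <= a 0%N -> (forall i, (i < t)%N -> (1 - u) * a i <= a i.+1) ->
  forall i, (i <= t)%N -> (1 - i%:R * u) * a 0%N <= a i.
Proof.
move=> /andP[u0 u1] a0 step; elim=> [|i IH] it; first by rewrite mul0r subr0 mul1r.
apply: le_trans (step i it); apply: le_trans (ler_wpM2l _ (IH (ltnW it))); last lra.
have : 0 <= i%:R * u * u * a 0%N by rewrite !mulr_ge0.
by rewrite -natr1; nra.
Qed.

Section BinomialAnticoncentration.
Variable R : archiFieldType.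
Implicit Types (q u : R) (m k j t : nat).

Lemma binom_pmf_ratio m q j : (j < m)%N ->
  binom_pmf m q j.+1 * j.+1%:R * (1 - q) = binom_pmf m q j * (m - j)%:R * q.
Proof.
move=> jm; rewrite !binom_pmfE -(subnSK jm).
have := congr1 (fun x : nat => x%:R : R) (mul_bin_left m j).
rewrite /= !natrM -(subnSK jm) => e.
transitivity ((j.+1%:R * 'C(m, j.+1)%:R) * (q ^+ j.+1 * (1 - q) ^+ (m - j.+1).+1)).
  by rewrite [(1 - q) ^+ _.+1]exprSr; ring.
by rewrite e [q ^+ j.+1]exprSr; ring.
Qed.

Lemma binom_pmf_succ_lb m q u j : 0 < q < 1 -> (j < m)%N -> 0 <= u ->
  j.+1%:R <= m%:R * q + u * (m%:R * q * (1 - q)) ->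
  (1 - u) * binom_pmf m q j <= binom_pmf m q j.+1.
Proof.
move=> /andP[q0 q1] jm u0 hj.
have c0 : 0 <= binom_pmf m q j by rewrite binom_pmf_ge0 // !ltW.
have pos : 0 < j.+1%:R * (1 - q) by rewrite mulr_gt0 ?ltr0n ?subr_gt0.
rewrite -(ler_pM2r pos) [X in _ <= X]mulrA binom_pmf_ratio // natrB 1?ltnW //.
suff : (1 - u) * (j.+1%:R * (1 - q)) <= (m%:R - j%:R) * q by nra.
rewrite -natr1 in hj *; have m0 : 0 <= m%:R :> R by [].
have [jmq|mqj] := lerP (j%:R + 1) (m%:R * q).
  have j1 : 0 <= j%:R + 1 :> R by rewrite addr_ge0.
  have : 0 <= u * (j%:R + 1) * (1 - q) by rewrite mulr_ge0 ?mulr_ge0 // subr_ge0 ltW.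
  nra.
have : u * (m%:R * q * (1 - q)) <= u * (j%:R + 1) * (1 - q).
  by rewrite -[leRHS]mulrA; apply: ler_wpM2l => //; apply: ler_wpM2r; rewrite ?subr_ge0 ?ltW.
nra.
Qed.

Lemma sum_binom_pmf_shift_le_tail m q k N : 0 <= q <= 1 ->
  \sum_(i < N) binom_pmf m q (k + i) <= binom_tail m q k.
Proof.
move=> q01; elim: N k => [|N IH] k; first by rewrite big_ord0 binom_tail_ge0.
rewrite big_ord_recl addn0 (binom_tail_split m q k) lerD2l.
by apply: le_trans (IH k.+1); under eq_bigr => i _ do rewrite /bump /= addnS.
Qed.

Lemma binom_pmf_plateau m q k t i : 0 < q < 1 -> k%:R <= m%:R * q ->
  2 * t%:R ^+ 2 <= m%:R * q * (1 - q) -> (i <= t)%N ->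
  binom_pmf m q k / 2 <= binom_pmf m q (k + i).
Proof.
move=> q01 hk ht it; have /andP[q0 q1] := q01.
have c0 : 0 <= binom_pmf m q k by rewrite binom_pmf_ge0 // !ltW.
have [t0|t_gt0] := posnP t.
  by move: it; rewrite t0 leqn0 => /eqP->; rewrite addn0 ler_pdivrMr //; nra.
set D := m%:R * q * (1 - q) in ht.
have t1 : 1 <= t%:R :> R by rewrite ler1n.
have Dp : 0 < D by nra.
set u := t%:R / D.
have uD : u * D = t%:R by rewrite mulfVK // gt_eqF.
have u0 : 0 <= u by rewrite divr_ge0 // ltW.
have ut : u * t%:R <= 1 / 2 by rewrite -(ler_pM2r Dp) mulrAC uD; nra.
have step j : (j < t)%N -> (1 - u) * binom_pmf m q (k + j) <= binom_pmf m q (k + j.+1).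
  move=> jt; rewrite addnS; apply: binom_pmf_succ_lb => //.
  - suff : (k + j).+1%:R <= m%:R :> R by rewrite ler_nat.
    have : (k + j).+1%:R <= k%:R + t%:R :> R by rewrite -addnS natrD lerD2l ler_nat.
    have : t%:R <= t%:R ^+ 2 :> R by rewrite expr2 ler_peMl.
    by rewrite /D in ht; nra.
  - by rewrite uD -addnS natrD lerD ?ler_nat.
have := linear_decay_lb (a := fun j => binom_pmf m q (k + j)) _ _ step it.
rewrite addn0 => /(_ _ c0) decay; apply: le_trans (decay _); last by rewrite u0 /=; nra.
have : i%:R * u <= t%:R * u :> R by rewrite ler_wpM2r // ler_nat.
nra.
Qed.

Lemma binom_pmf_mode_bound m q k t : 0 < q < 1 -> k%:R <= m%:R * q ->
  2 * t%:R ^+ 2 <= m%:R * q * (1 - q) -> binom_pmf m q k * t.+1%:R <= 2.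
Proof.
move=> q01 hk ht; have q01' : 0 <= q <= 1 by case/andP: q01 => ? ?; rewrite !ltW.
have plateau : \sum_(i < t.+1) binom_pmf m q k / 2 <= \sum_(i < t.+1) binom_pmf m q (k + i).
  by apply: ler_sum => i _; apply: (binom_pmf_plateau (t := t)) => //; rewrite -ltnS.
have := le_trans plateau (sum_binom_pmf_shift_le_tail m k t.+1 q01').
rewrite sumr_const card_ord -mulr_natr; have := binom_tail_le1 m k q01'.
lra.
Qed.

Lemma nat_sqr_bracket (D : R) : 0 <= D ->
  exists t : nat, 2 * t%:R ^+ 2 <= D < 2 * t.+1%:R ^+ 2.
Proof.
move=> D0.
have ex : exists t : nat, D < 2 * t.+1%:R ^+ 2.
  exists (Num.Def.archi_bound D); have := archi_boundP D0.
  set N := Num.Def.archi_bound D => DN.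
  have : N%:R <= N.+1%:R ^+ 2 :> R.
    by rewrite -natrX ler_nat (leq_trans (leqnSn N)) // expnS leq_pmulr.
  lra.
case: (ex_minnP ex) => t ht tmin; exists t; rewrite ht andbT.
case: t ht tmin => [|s] ht tmin; first by rewrite expr0n /= mulr0.
by rewrite leNgt; apply/negP => /tmin; rewrite ltnn.
Qed.

Lemma sqr_binom_pmf_var_le m q k : 0 <= q <= 1 ->
  binom_pmf m q k ^+ 2 * (m%:R * q * (1 - q)) <= 8.
Proof.
move=> q01; have /andP[q0 q1] := q01.
have c0 := binom_pmf_ge0 m k q01.
have [->|qn0] := eqVneq q 0; first by rewrite mulr0 mul0r mulr0.
have [->|qn1] := eqVneq q 1; first by rewrite subrr !mulr0.
have q01s : 0 < q < 1 by rewrite !lt_neqAle q0 q1 eq_sym qn0 qn1.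
have D0 : 0 <= m%:R * q * (1 - q) by rewrite !mulr_ge0 ?subr_ge0.
have [t /andP[ht1 ht2]] := nat_sqr_bracket D0.
suff : binom_pmf m q k * t.+1%:R <= 2.
  move=> h; have : 0 <= binom_pmf m q k * t.+1%:R by rewrite mulr_ge0.
  have : binom_pmf m q k ^+ 2 * (m%:R * q * (1 - q))
      <= binom_pmf m q k ^+ 2 * (2 * t.+1%:R ^+ 2).
    by apply: ler_wpM2l; [exact: exprn_ge0 | exact: ltW].
  rewrite !expr2; nra.
have [kmq|mqk] := lerP k%:R (m%:R * q); first exact: binom_pmf_mode_bound.
have [km|mk] := leqP k m; last by rewrite binom_pmf_small // mul0r.
rewrite binom_pmf_compl //; apply: binom_pmf_mode_bound.
- by case/andP: q01s => ? ?; apply/andP; split; lra.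
- by rewrite natrB //; lra.
- by rewrite (_ : 1 - (1 - q) = q); [rewrite mulrAC | ring].
Qed.

Lemma compl_binom_pmf_lt m q k c e : 0 <= q <= 1 -> c <= q -> 0 < e ->
  8 < e ^+ 2 * (m%:R * c) -> (1 - q) * binom_pmf m q k < e.
Proof.
move=> q01 cq e0 large; have /andP[q0 q1] := q01; have m0 : 0 <= m%:R :> R by [].
have pmf0 := binom_pmf_ge0 m k q01; set x := (1 - q) * _.
have x0 : 0 <= x by rewrite mulr_ge0 ?subr_ge0.
have mc0 : 0 < m%:R * c.
  rewrite ltNge; apply/negP => mc.
  have : e ^+ 2 * (m%:R * c) <= 0 by rewrite pmulr_rle0 ?exprn_gt0.
  lra.
have x8 : x ^+ 2 * (m%:R * c) <= 8.
  apply: le_trans (sqr_binom_pmf_var_le m k q01).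
  have h : (1 - q) * (m%:R * c) <= m%:R * q by nra.
  have w0 : 0 <= (1 - q) * binom_pmf m q k ^+ 2 by rewrite mulr_ge0 ?exprn_ge0 ?subr_ge0.
  by have := ler_wpM2l w0 h; rewrite /x !exprMn !expr2; lra.
rewrite ltNge; apply/negP => ex.
have : e ^+ 2 <= x ^+ 2 by rewrite !expr2; nra.
nra.
Qed.

End BinomialAnticoncentration.

Section ChernoffBounds.
Variables (R : realFieldType) (p : R).
Hypothesis p_gt_half : 1 / 2 < p < 1.

Definition chernoff_rate : R := 1 / 2 + 2 * p * (1 - p).

Lemma chernoff_rate_gt0 : 0 < chernoff_rate.
Proof. by case/andP: p_gt_half => ? ?; rewrite /chernoff_rate; nra. Qed.

Lemma chernoff_rate_lt1 : chernoff_rate < 1.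
Proof. by case/andP: p_gt_half => ? ?; rewrite /chernoff_rate; nra. Qed.

(* Markov's inequality for w ^ (2 X) with w = 1 / (2 (1 - p)). *)
Lemma binom_tail_compl_le_chernoff m k : (m <= 2 * k)%N ->
  binom_tail m (1 - p) k <= chernoff_rate ^+ m.
Proof.
case/andP: p_gt_half => p1 p2 mk.
set w := (2 * (1 - p))^-1.
have ww : w * (2 * (1 - p)) = 1 by rewrite mulVf // gt_eqF //; lra.
have w0 : 0 < w by rewrite invr_gt0; lra.
have w1 : 1 <= w by nra.
have q01 : 0 <= 1 - p <= 1 by apply/andP; split; lra.
have := binom_tail_pgf_ub m k q01 (_ : 1 <= w ^+ 2); rewrite -exprM.
have -> : (1 - p) * w ^+ 2 + (1 - (1 - p)) = chernoff_rate * w.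
  by rewrite /chernoff_rate expr2; nra.
rewrite exprMn => h.
have T0 := binom_tail_ge0 m k q01.
have wm : w ^+ m <= w ^+ (2 * k) by apply: ler_weXn2l.
rewrite -(ler_pM2l (exprn_gt0 m w0)).
apply: le_trans (ler_wpM2r T0 wm) _; rewrite [w ^+ m * _]mulrC.
by apply: h; rewrite expr2; nra.
Qed.

(* Markov's inequality for v ^ (2 (n - X)) with v = 2 (1 - p). *)
Lemma binom_tail_ge_chernoff n k : (2 * k <= n)%N ->
  1 - chernoff_rate ^+ n <= binom_tail n p k.+1.
Proof.
case/andP: p_gt_half => p1 p2 kn.
set v := 2 * (1 - p).
have v0 : 0 < v by rewrite /v; lra.
have v1 : v <= 1 by rewrite /v; lra.
have q01 : 0 <= p <= 1 by apply/andP; split; lra.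
have z01 : 0 < v ^+ 2 <= 1 by rewrite exprn_gt0 // exprn_ile1 // ltW.
have := binom_tail_pgf_lb n k q01 z01; rewrite -exprM.
have -> : p * v ^+ 2 + (1 - p) = chernoff_rate * v by rewrite /chernoff_rate /v expr2; field.
rewrite [X in _ <= X]exprMn => h.
have wm : v ^+ n <= v ^+ (2 * k) by apply: ler_wiXn2l => //; rewrite ltW.
have T1 := binom_tail_le1 n k.+1 q01.
suff : v ^+ n * (1 - binom_tail n p k.+1) <= v ^+ n * chernoff_rate ^+ n.
  by rewrite ler_pM2l ?exprn_gt0 //; lra.
apply: le_trans (ler_wpM2r _ wm) _; first lra.
by rewrite (mulrC (v ^+ n)).
Qed.

End ChernoffBounds.

Section CountingGeneratingFunction.
Variables (R : comNzRingType) (n : nat).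

Definition ncontrib (a : {ffun 'I_n -> bool}) : nat := (\sum_i (a i : nat))%N.

Lemma ncontrib_lt (a : {ffun 'I_n -> bool}) : (ncontrib a < n.+1)%N.
Proof.
rewrite ltnS -[leqRHS]card_ord -sum1_card; apply: leq_sum => i _.
by case: (a i).
Qed.

Lemma sum_ffun_prod_ncontrib (W : 'I_n -> bool -> R) (F : nat -> R) :
  \sum_(a : {ffun 'I_n -> bool}) (\prod_i W i (a i)) * F (ncontrib a) =
  \sum_(k < n.+1) (\prod_i ((W i true)%:P * 'X + (W i false)%:P))`_k * F k.
Proof.
have -> : \prod_i ((W i true)%:P * 'X + (W i false)%:P) =
    \sum_(a : {ffun 'I_n -> bool}) (\prod_i W i (a i))%:P * 'X^(ncontrib a).
  rewrite (eq_bigr (fun i => \sum_(b : bool) (W i b)%:P * 'X^b)); last first.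
    by move=> i _; rewrite big_bool /= expr1 expr0 mulr1.
  rewrite bigA_distr_bigA; apply: eq_bigr => a _.
  by rewrite big_split /= rmorph_prod prodrXr.
under [RHS]eq_bigr => k _ do rewrite coef_sum big_distrl /=.
rewrite exchange_big /=; apply: eq_bigr => a _.
rewrite (eq_bigr (fun k : 'I_n.+1 => \prod_i W i (a i) * ((ncontrib a == k)%:R * F k))).
  by rewrite -mulr_sumr sum_ord_eq_indicator ncontrib_lt.
by move=> k _; rewrite coefCM coefXn mulrA eq_sym.
Qed.

End CountingGeneratingFunction.

Section BinomialReduction.
Variables (R : realType) (p : R).

Definition contrib_prob (x : bool -> R) (omega : bool) : R :=
  \sum_(s : bool) sig_prob p omega s * x s.

Lemma contrib_probT x : contrib_prob x true = p * x true + (1 - p) * x false.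
Proof. by rewrite /contrib_prob big_bool. Qed.

Lemma contrib_probF x : contrib_prob x false = (1 - p) * x true + p * x false.
Proof. by rewrite /contrib_prob big_bool. Qed.

Lemma contrib_prob_ge0 x omega : 0 <= p <= 1 -> strategy_ok x ->
  0 <= contrib_prob x omega <= 1.
Proof.
move=> /andP[p0 p1] xok; have /andP[? ?] := xok true; have /andP[? ?] := xok false.
by case: omega; rewrite ?contrib_probT ?contrib_probF; apply/andP; split; nra.
Qed.

Lemma sum_act_prob_signal (q : bool -> R) omega c :
  \sum_(s : bool) sig_prob p omega s * act_prob (q s) c = act_prob (contrib_prob q omega) c.
Proof.
case: c => //=; rewrite /contrib_prob !big_bool /sig_prob /=.
by case: omega => /=; ring.
Qed.

Lemma expect_signal_free n (sigma : profile R n) (g : bool -> {ffun 'I_n -> bool} -> R) :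
  expect p sigma (fun omega _ a => g omega a) =
  \sum_(omega : bool) \sum_(a : {ffun 'I_n -> bool})
     1 / 2 * (\prod_i act_prob (contrib_prob (sigma i) omega) (a i)) * g omega a.
Proof.
apply: eq_bigr => omega _; rewrite exchange_big /=; apply: eq_bigr => a _.
rewrite -big_distrl /= /weight; congr (_ * _).
under eq_bigr => s _ do rewrite -mulrA -big_split /=.
rewrite -mulr_sumr; congr (_ * _).
under [RHS]eq_bigr => i _ do rewrite -sum_act_prob_signal.
by rewrite bigA_distr_bigA.
Qed.

Lemma sum_binom_pmf_threshold m q B (c1 c0 : R) :
  \sum_(k < m.+1) binom_pmf m q k * (if (B <= k)%N then c1 else c0) =
  c1 * binom_tail m q B + c0 * (1 - binom_tail m q B).
Proof.
rewrite -(sum_binom_pmf m q) /binom_tail -sumrB !mulr_sumr -big_split /=.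
by apply: eq_bigr => k _; case: leqP => _; rewrite ?mul1r ?mul0r; ring.
Qed.

Lemma expect_sym_funded n tau B (F : bool -> bool -> R) :
  expect p (@symmetric_profile R n tau) (fun omega _ a => F omega (funded B a)) =
  1 / 2 * \sum_(omega : bool) (F omega true * binom_tail n (contrib_prob tau omega) B +
                               F omega false * (1 - binom_tail n (contrib_prob tau omega) B)).
Proof.
rewrite expect_signal_free mulr_sumr; apply: eq_bigr => omega _.
under eq_bigr => a _ do rewrite -mulrA.
rewrite -mulr_sumr -sum_binom_pmf_threshold; congr (_ * _).
set q := contrib_prob tau omega.
have /= -> := sum_ffun_prod_ncontrib (fun _ => act_prob q) (fun k => F omega (B <= k)%N).
by rewrite prodr_const card_ord; apply: eq_bigr => k _; case: leqP.
Qed.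

Lemma theta_of_sym n tau B :
  theta_of p B (@symmetric_profile R n tau) =
  1 / 2 * binom_tail n (contrib_prob tau true) B +
  1 / 2 * (1 - binom_tail n (contrib_prob tau false) B).
Proof.
have := expect_sym_funded n tau B
  (fun omega f => if omega then (if f then 1 else 0) else (if f then 0 else 1)).
by rewrite /theta_of => ->; rewrite big_bool /=; ring.
Qed.

Lemma funding_prob_sym n tau B :
  expect p (@symmetric_profile R n tau) (fun _ _ a => if funded B a then 1 else 0) =
  1 / 2 * binom_tail n (contrib_prob tau true) B +
  1 / 2 * binom_tail n (contrib_prob tau false) B.
Proof.
have := expect_sym_funded n tau B (fun _ f => if f then 1 else 0).
by move=> ->; rewrite big_bool /=; ring.
Qed.

Lemma prodr_if_eq (T : comNzRingType) n (i : 'I_n) (x y : T) :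
  \prod_(j < n) (if j == i then x else y) = x * y ^+ n.-1.
Proof.
rewrite (bigD1 i) //= eqxx (eq_bigr (fun _ => y)) => [|j /negbTE -> //].
by rewrite prodr_const cardC1 card_ord.
Qed.

Lemma expect_payoff_state m b tau x (i : 'I_m.+1) omega :
  \sum_(a : {ffun 'I_m.+1 -> bool}) 1 / 2 *
    (\prod_j act_prob (contrib_prob (deviate (@symmetric_profile R m.+1 tau) i x j) omega) (a j)) *
    payoff R b.+1 i omega a =
  1 / 2 * (if omega then 1 else -1) *
    (contrib_prob x omega * binom_tail m (contrib_prob tau omega) b).
Proof.
set qx := contrib_prob x omega; set q := contrib_prob tau omega.
(* [W] discards the action profiles in which player [i] abstains: they pay nothing. *)
pose W (j : 'I_m.+1) (c : bool) := if j == i then (if c then qx else 0) else act_prob q c.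
have summand (a : {ffun 'I_m.+1 -> bool}) : 1 / 2 * (\prod_j act_prob (contrib_prob
      (deviate (@symmetric_profile R m.+1 tau) i x j) omega) (a j)) * payoff R b.+1 i omega a =
    1 / 2 * (if omega then 1 else -1) * ((\prod_j W j (a j)) * (b < ncontrib a)%:R).
  rewrite /payoff /funded -/(ncontrib a) (bigD1 i) //= [in RHS](bigD1 i) //=.
  rewrite /W /deviate !eqxx -/qx.
  rewrite (eq_bigr (fun j => act_prob q (a j))); last by move=> j /negbTE ->.
  rewrite [in RHS](eq_bigr (fun j => act_prob q (a j))); last by move=> j /negbTE ->.
  move: (1 / 2 : R) (if omega then 1 else -1 : R) (\prod_(j | j != i) _) => u v P.
  by case: (a i) (b < ncontrib a)%N => [] [] /=; ring.
rewrite (eq_bigr _ (fun a _ => summand a)) -mulr_sumr.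
have /= -> := sum_ffun_prod_ncontrib W (fun k => (b < k)%:R); congr (_ * _).
have -> : \prod_j ((W j true)%:P * 'X + (W j false)%:P) = qx%:P * 'X * binom_poly q ^+ m.
  rewrite -[m]/(m.+1.-1) -(prodr_if_eq i); apply: eq_bigr => j _; rewrite /W.
  by case: eqP => _; rewrite ?addr0.
rewrite big_ord_recl /= mulr0 add0r /binom_tail mulr_sumr; apply: eq_bigr => k _.
by rewrite -mulrA coefCM coefXM /= /bump /= add1n -/(binom_pmf m q k); ring.
Qed.

(* Contributing after signal [s] pays [+1] in state H and [-1] in state L exactly
   when at least [b] of the other [m] players contribute; [incentive] weighs these
   events by the likelihood of [s] in each state. *)
Definition incentive m b (tau : bool -> R) (s : bool) : R :=
  sig_prob p true s * binom_tail m (contrib_prob tau true) b -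
  sig_prob p false s * binom_tail m (contrib_prob tau false) b.

Lemma exp_payoff_deviate_sym m b tau x (i : 'I_m.+1) :
  exp_payoff p b.+1 (deviate (@symmetric_profile R m.+1 tau) i x) i =
  1 / 2 * \sum_(s : bool) x s * incentive m b tau s.
Proof.
rewrite /exp_payoff expect_signal_free big_bool /= !expect_payoff_state.
by rewrite big_bool /incentive contrib_probT contrib_probF /sig_prob /=; ring.
Qed.

End BinomialReduction.

Section LinearMaximizer.
Variables (R : realFieldType) (S : finType) (I tau : S -> R).

Definition unit_cube (x : S -> R) := forall s, 0 <= x s <= 1.

Definition cube_maximizer :=
  forall x, unit_cube x -> \sum_s x s * I s <= \sum_s tau s * I s.

Hypothesis tau_cube : unit_cube tau.

Let sum_update s c :
  \sum_s' (if s' == s then c else tau s') * I s' - \sum_s' tau s' * I s' = (c - tau s) * I s.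
Proof.
rewrite (bigD1 s) //= [X in _ - X](bigD1 s) //= eqxx.
rewrite (eq_bigr (fun s' => tau s' * I s')) => [|s' /negbTE -> //]; ring.
Qed.

Let update_cube s c : 0 <= c <= 1 -> unit_cube (fun s' => if s' == s then c else tau s').
Proof. by move=> c01 s'; case: eqP. Qed.

Lemma cube_maximizer_pos s : cube_maximizer -> 0 < I s -> tau s = 1.
Proof.
move=> max Is; have := max _ (update_cube s (c := 1) _); rewrite ler01 lexx => /(_ isT).
rewrite -subr_le0 sum_update pmulr_lle0 // subr_le0 => ?.
by apply/eqP; rewrite eq_le; have /andP[_ ->] := tau_cube s.
Qed.

Lemma cube_maximizer_neg s : cube_maximizer -> I s < 0 -> tau s = 0.
Proof.
move=> max Is; have := max _ (update_cube s (c := 0) _); rewrite ler01 lexx => /(_ isT).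
rewrite -subr_le0 sum_update nmulr_lle0 // subr_ge0 => ?.
by apply/eqP; rewrite eq_le; have /andP[-> _] := tau_cube s; rewrite andbT.
Qed.

Lemma cube_maximizer_of_signs :
  (forall s, 0 < I s -> tau s = 1) -> (forall s, I s < 0 -> tau s = 0) -> cube_maximizer.
Proof.
move=> pos neg x xcube; apply: ler_sum => s _.
have /andP[x0 x1] := xcube s.
have [Is|Is|<-] := ltgtP 0 (I s); last by rewrite !mulr0.
- by rewrite pos // mul1r ler_piMl // ltW.
- by rewrite neg // mul0r nmulr_lle0.
Qed.

End LinearMaximizer.

Section SymmetricEquilibrium.
Variables (R : realType) (p : R) (m b : nat).
Hypotheses (p_gt_half : 1 / 2 < p < 1) (b_le_m : (b <= m)%N).

Let p_gt0 : 0 < p. Proof. by case/andP: p_gt_half => ? ?; lra. Qed.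
Let p01 : 0 <= p <= 1. Proof. by case/andP: p_gt_half => ? ?; apply/andP; lra. Qed.

Lemma deviate_sym_self n (tau : bool -> R) (i : 'I_n) :
  deviate (@symmetric_profile R n tau) i tau = symmetric_profile tau.
Proof. by apply: funext => j; rewrite /deviate; case: eqP. Qed.

Lemma sym_BNE_iff tau :
  is_BNE p b.+1 (@symmetric_profile R m.+1 tau) <->
  strategy_ok tau /\ cube_maximizer (incentive p m b tau) tau.
Proof.
split=> [[ok best]|[ok max]].
  split=> [|x xok]; first exact: ok ord0.
  have := best ord0 x xok; rewrite -{2}(deviate_sym_self tau ord0).
  by rewrite !exp_payoff_deviate_sym ler_pM2l.
split=> [//|i x xok]; rewrite -{2}(deviate_sym_self tau i).
by rewrite !exp_payoff_deviate_sym ler_pM2l // max.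
Qed.

Variable tau : bool -> R.
Hypothesis tau_ok : strategy_ok tau.

Local Notation qH := (contrib_prob p tau true).
Local Notation qL := (contrib_prob p tau false).
Local Notation PH := (binom_tail m qH b).
Local Notation PL := (binom_tail m qL b).

Let qH01 : 0 <= qH <= 1. Proof. exact: contrib_prob_ge0. Qed.
Let qL01 : 0 <= qL <= 1. Proof. exact: contrib_prob_ge0. Qed.
Let PH01 : 0 <= PH <= 1. Proof. by rewrite binom_tail_ge0 ?binom_tail_le1. Qed.
Let PL01 : 0 <= PL <= 1. Proof. by rewrite binom_tail_ge0 ?binom_tail_le1. Qed.

Lemma incentive_L_le_H : incentive p m b tau false <= incentive p m b tau true.
Proof.
rewrite /incentive /sig_prob /=.
by case/andP: p_gt_half; case/andP: PH01; case/andP: PL01; nra.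
Qed.

Lemma incentive_H_ge0 : tau false <= tau true -> 0 <= incentive p m b tau true.
Proof.
move=> rla.
have qLH : qL <= qH by rewrite contrib_probT contrib_probF; case/andP: p_gt_half; nra.
have PLH : PL <= PH by apply: binom_tail_monotone qLH _; [case/andP: qL01 | case/andP: qH01].
by rewrite /incentive /sig_prob /=; case/andP: p_gt_half; case/andP: PL01; nra.
Qed.

Hypothesis tau_BNE : cube_maximizer (incentive p m b tau) tau.

Local Notation IH := (incentive p m b tau true).
Local Notation IL := (incentive p m b tau false).

Lemma sym_BNE_incentive_L_le0 : IL <= 0.
Proof.
rewrite leNgt; apply/negP => IL0.
have IH0 := lt_le_trans IL0 incentive_L_le_H.
have a1 := cube_maximizer_pos tau_ok tau_BNE IH0.
have r1 := cube_maximizer_pos tau_ok tau_BNE IL0.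
move: IL0; rewrite /incentive contrib_probT contrib_probF a1 r1 /sig_prob /= !mulr1.
by rewrite subrKC subrK binom_tail_q1 // !mulr1; case/andP: p_gt_half; lra.
Qed.

(* If players sometimes abstain after H, contributing after H is weakly
   unprofitable; together with [IL <= 0] this forces [PH = 0], whichever of [qH]
   and [qL] is larger. *)
Lemma sym_BNE_tail_H_eq0 : tau true < 1 -> PH = 0.
Proof.
move=> a_lt1; have IH_le0 : IH <= 0.
  by rewrite leNgt; apply: contraTN a_lt1 => /(cube_maximizer_pos tau_ok tau_BNE) ->; rewrite ltxx.
have IL_le0 := sym_BNE_incentive_L_le0.
move: IH_le0 IL_le0; rewrite /incentive /sig_prob /=.
have [ra|ar] := lerP (tau false) (tau true).
  have qLH : qL <= qH by rewrite contrib_probT contrib_probF; case/andP: p_gt_half; nra.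
  have := binom_tail_monotone m b (proj1 (andP qL01)) qLH (proj2 (andP qH01)).
  by case/andP: p_gt_half; case/andP: PH01; nra.
have IL0 : 0 <= IL.
  rewrite leNgt; apply/negP => /(cube_maximizer_neg tau_ok tau_BNE) r0.
  by have := tau_ok true; rewrite r0 in ar; case/andP; lra.
have qHL : qH <= qL by rewrite contrib_probT contrib_probF; case/andP: p_gt_half; nra.
have := binom_tail_monotone m b (proj1 (andP qH01)) qHL (proj2 (andP qL01)).
by move: IL0; rewrite /incentive /sig_prob /=; case/andP: p_gt_half; case/andP: PH01; nra.
Qed.

Lemma sym_BNE_contrib_H : nontrivial p b.+1 (@symmetric_profile R m.+1 tau) -> tau true = 1.
Proof.
rewrite /nontrivial funding_prob_sym => funded_pos.
have /andP[a0 a1] := tau_ok true; have /andP[r0 r1] := tau_ok false.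
have [a_lt1|] := ltP (tau true) 1; last by move=> a_ge1; apply/eqP; rewrite eq_le a1.
have qH0 := binom_tail_eq0 b_le_m qH01 (sym_BNE_tail_H_eq0 a_lt1).
have [a00 r00] : tau true = 0 /\ tau false = 0.
  by move: qH0; rewrite contrib_probT; case/andP: p_gt_half => ? ?; split; nra.
have qL0 : qL = 0 by rewrite contrib_probF a00 r00 !mulr0 addr0.
by move: funded_pos; rewrite qH0 qL0 binom_tail_q0 !mulr0 addr0 ltxx.
Qed.

(* The incentive constraint after L, [(1 - p) PH <= p PL], bounds [PH - PL] by
   [(2 p - 1) / p]. *)
Lemma sym_BNE_theta_ub : 2 * p * theta_of p b.+1 (@symmetric_profile R m.+1 tau) <=
  3 * p - 1 + p * ((1 - qL) * binom_pmf m qL b).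
Proof.
rewrite theta_of_sym (binom_tail_step m qL b).
have TH := binom_tail_stepW m b qH01; have := sym_BNE_incentive_L_le0.
rewrite /incentive /sig_prob /= => IL_le0; case/andP: p_gt_half => ? ?; case/andP: PH01 => ? ?.
have : p * binom_tail m.+1 qH b.+1 <= p * PH by rewrite ler_pM2l.
have : 0 <= (2 * p - 1) * (1 - PH) by rewrite mulr_ge0 //; lra.
lra.
Qed.

Hypothesis tau_nontrivial : nontrivial p b.+1 (@symmetric_profile R m.+1 tau).

Let a1 : tau true = 1. Proof. exact: sym_BNE_contrib_H. Qed.

Lemma sym_BNE_contrib_L_ge : 1 - p <= qL.
Proof.
by rewrite contrib_probF a1 mulr1 lerDl mulr_ge0 //; [case/andP: p01 | case/andP: (tau_ok false)].
Qed.

Lemma sym_BNE_theta_lb :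
  p * binom_tail m.+1 p b.+1 + 2 * p - 1 - p * binom_tail m (1 - p) b <=
  2 * p * theta_of p b.+1 (@symmetric_profile R m.+1 tau).
Proof.
have /andP[r0 r1] := tau_ok false.
have qH_ge : p <= qH by rewrite contrib_probT a1 mulr1 lerDl mulr_ge0 // subr_ge0; case/andP: p01.
have TH := binom_tail_monotone m.+1 b.+1 (proj1 (andP p01)) qH_ge (proj2 (andP qH01)).
have TL := binom_tail_stepW m b qL01.
(* Either players never contribute after L, so that [qL = 1 - p], or they are
   indifferent after L, so that [p PL = (1 - p) PH]. *)
have PL_le : p * PL <= 1 - p + p * binom_tail m (1 - p) b.
  have T0 : 0 <= binom_tail m (1 - p) b.
    by apply: binom_tail_ge0; case/andP: p01 => ? ?; apply/andP; lra.
  have [IL_lt0|IL_ge0] := ltP IL 0.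
    have r00 := cube_maximizer_neg tau_ok tau_BNE IL_lt0.
    rewrite contrib_probF a1 r00 mulr1 mulr0 addr0; case/andP: p_gt_half; lra.
  have := sym_BNE_incentive_L_le0; move: IL_ge0.
  by rewrite /incentive /sig_prob /=; case/andP: p_gt_half; case/andP: PH01; nra.
have := ler_wpM2l (ltW p_gt0) TH; have := ler_wpM2l (ltW p_gt0) TL.
by rewrite theta_of_sym; lra.
Qed.

End SymmetricEquilibrium.

Section Existence.
Variables (R : realType) (p : R) (m b : nat).
Hypotheses (p_gt_half : 1 / 2 < p < 1) (b_le_m : (b <= m)%N).

Definition threshold_strategy (r : R) : bool -> R := fun s => if s then 1 else r.

Local Notation incentive_L r := (incentive p m b (threshold_strategy r) false).

Lemma continuous_incentive_L : continuous (fun r : R => incentive_L r).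
Proof.
pose P := binom_tail_poly R m b.
have -> : (fun r : R => incentive_L r) = horner ((1 - p)%:P * (P \Po (p%:P + (1 - p)%:P * 'X))
                                             - p%:P * (P \Po ((1 - p)%:P + p%:P * 'X))).
  apply: funext => r; rewrite /incentive /sig_prob /= contrib_probT contrib_probF /=.
  by rewrite !(hornerE, horner_comp) !horner_binom_tail_poly.
exact: continuous_horner.
Qed.

Lemma exists_incentive_L_root : exists r, [/\ 0 <= r <= 1, incentive_L r <= 0 &
  (incentive_L r < 0 -> r = 0)].
Proof.
have [IL0|IL0] := lerP (incentive_L 0) 0.
  by exists 0; split; rewrite ?lexx ?ler01.
have IL1 : incentive_L 1 < 0.
  rewrite /incentive /sig_prob /= contrib_probT contrib_probF /threshold_strategy /=.
  rewrite !mulr1 subrKC subrK binom_tail_q1 //; case/andP: p_gt_half; lra.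
have cont : {within `[0, 1], continuous (fun r : R => incentive_L r)}%classic.
  exact: continuous_subspaceT continuous_incentive_L.
have [|r] := IVT ler01 cont (v := 0).
  by rewrite ge_min le_max (ltW IL0) (ltW IL1) orbT.
by rewrite in_itv /= => r01 ILr; exists r; rewrite r01 ILr lexx ltxx.
Qed.

Lemma threshold_strategy_ok r : 0 <= r <= 1 -> strategy_ok (threshold_strategy r).
Proof. by move=> r01 []; rewrite /= ?lexx ?ler01. Qed.

Lemma threshold_strategy_BNE r : 0 <= r <= 1 -> incentive_L r <= 0 ->
  (incentive_L r < 0 -> r = 0) -> is_BNE p b.+1 (@symmetric_profile R m.+1 (threshold_strategy r)).
Proof.
move=> r01 IL_le0 IL_slack; have tau_ok := threshold_strategy_ok r01.
apply/sym_BNE_iff; split=> //; apply: cube_maximizer_of_signs => -[] /= I_s.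
- by [].
- by move: I_s; rewrite ltNge IL_le0.
- by move: I_s; rewrite ltNge incentive_H_ge0 //; case/andP: r01.
- exact: IL_slack.
Qed.

Lemma threshold_strategy_nontrivial r : 0 <= r <= 1 ->
  nontrivial p b.+1 (@symmetric_profile R m.+1 (threshold_strategy r)).
Proof.
move=> r01; have tau_ok := threshold_strategy_ok r01.
have /andP[p1 p2] := p_gt_half; have p01 : 0 <= p <= 1 by apply/andP; lra.
rewrite /nontrivial funding_prob_sym; set qH := contrib_prob p _ true.
have qH_ge : p <= qH.
  rewrite /qH contrib_probT /= mulr1 lerDl; case/andP: r01 => r0 _.
  by rewrite mulr_ge0 // subr_ge0 ltW.
have := binom_tail_ge_expr (contrib_prob_ge0 true p01 tau_ok) (b_le_m : (b.+1 <= m.+1)%N).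
have := binom_tail_ge0 m.+1 b.+1 (contrib_prob_ge0 false p01 tau_ok).
have : 0 < qH ^+ m.+1 by rewrite exprn_gt0 // (lt_le_trans _ qH_ge) //; lra.
lra.
Qed.

Lemma exists_sym_nontrivial_BNE : exists tau, is_sym_nontrivial_BNE p b.+1 m.+1 tau.
Proof.
have [r [r01 IL_le0 IL_slack]] := exists_incentive_L_root.
exists (threshold_strategy r); split; first exact: threshold_strategy_BNE.
exact: threshold_strategy_nontrivial.
Qed.

End Existence.

Lemma double_half_succ_bounds m : (m <= 2 * (m.+1)./2 <= m.+1)%N.
Proof. by have := odd_double_half m.+1; case: odd => /=; lia. Qed.

Section Limit.
Variables (R : realType) (p : R).
Hypothesis p_gt_half : 1 / 2 < p < 1.

Local Notation L := ((3 * p - 1) / (2 * p)).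

Let L_2p : L * (2 * p) = 3 * p - 1.
Proof. by rewrite mulfVK // gt_eqF //; case/andP: p_gt_half => ? ?; lra. Qed.

Lemma the_equilibrium_spec m b : (b <= m)%N ->
  is_sym_nontrivial_BNE p b.+1 m.+1 (the_equilibrium p b.+1 m.+1).
Proof. by move=> bm; apply: epsilon_spec; exact: exists_sym_nontrivial_BNE. Qed.

Lemma theta_ub m b e : (b <= m)%N -> 0 < e -> 8 < e ^+ 2 * (m%:R * (1 - p)) ->
  theta p b.+1 m.+1 <= L + e / 2.
Proof.
move=> bm e0 large; have /andP[p1 p2] := p_gt_half.
have [/sym_BNE_iff [ok max] nontriv] := the_equilibrium_spec bm.
have ub := sym_BNE_theta_ub p_gt_half bm ok max.
have qL_ge := sym_BNE_contrib_L_ge p_gt_half bm ok max nontriv.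
have qL01 : 0 <= contrib_prob p (the_equilibrium p b.+1 m.+1) false <= 1.
  by apply: contrib_prob_ge0 => //; apply/andP; lra.
have := compl_binom_pmf_lt b qL01 qL_ge e0 large.
rewrite -(ler_pM2r (_ : 0 < 2 * p)); last lra.
by rewrite [leRHS]mulrDl L_2p /theta; nra.
Qed.

Lemma theta_lb m b : (m <= 2 * b)%N -> (2 * b <= m.+1)%N ->
  L - chernoff_rate p ^+ m <= theta p b.+1 m.+1.
Proof.
move=> m_le b_le; have /andP[p1 p2] := p_gt_half; have bm : (b <= m)%N by lia.
have [/sym_BNE_iff [ok max] nontriv] := the_equilibrium_spec bm.
have lb := sym_BNE_theta_lb p_gt_half bm ok max nontriv.
have lo := binom_tail_ge_chernoff p_gt_half b_le.
have up := binom_tail_compl_le_chernoff p_gt_half m_le.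
have rate0 := chernoff_rate_gt0 p_gt_half; have rate1 := chernoff_rate_lt1 p_gt_half.
have rateS : p * chernoff_rate p ^+ m.+1 <= p * chernoff_rate p ^+ m.
  by rewrite ler_wpM2l ?exprS ?ler_piMl ?exprn_ge0 ?ltW //; lra.
rewrite -(ler_pM2r (_ : 0 < 2 * p)); last lra.
by rewrite /theta mulrBl L_2p; nra.
Qed.

Lemma max_theta_ub m e : 0 < e -> 8 < e ^+ 2 * (m%:R * (1 - p)) ->
  max_theta p m.+1 <= L + e / 2.
Proof.
move=> e0 large; rewrite /max_theta big_seq; apply: bigmax_le => [|B].
  have L0 : 0 <= L by rewrite divr_ge0 //; case/andP: p_gt_half => ? ?; lra.
  by rewrite addr_ge0 // divr_ge0 // ltW.
by rewrite mem_index_iota; case: B => [//|b] /andP[_ bm]; apply: theta_ub.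
Qed.

Lemma max_theta_lb m : L - chernoff_rate p ^+ m <= max_theta p m.+1.
Proof.
have [m_le b_le] := andP (double_half_succ_bounds m).
have Bm : ((m.+1)./2).+1 \in index_iota 1 m.+2 by rewrite mem_index_iota; lia.
apply: le_trans (theta_lb m_le b_le) _.
by rewrite /max_theta big_seq; apply: (le_bigmax_seq _ _ _ _ Bm Bm).
Qed.

End Limit.

Theorem theorem2 (R : realType) (p : R) (hp : 1 / 2 < p < 1) :
  (fun n : nat => max_theta p n) @ \oo --> (3 * p - 1) / (2 * p) /\
  (3 * p - 1) / (2 * p) < 1.
Proof.
have /andP[p1 p2] := hp.
split; last by rewrite ltr_pdivrMr ?mul1r; lra.
rewrite -cvg_shiftS; apply/cvgrPdist_lt => e e0.
have rate_small : \forall m \near \oo, chernoff_rate p ^+ m < e.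
  have rate1 : `|chernoff_rate p| < 1.
    by rewrite ger0_norm ?ltW ?chernoff_rate_gt0 ?chernoff_rate_lt1.
  apply: filterS ((cvgrPdist_lt _ _).1 (cvg_expr rate1) e e0) => m.
  by rewrite sub0r normrN ger0_norm // exprn_ge0 // ltW // chernoff_rate_gt0.
have m_large : \forall m \near \oo, 8 < e ^+ 2 * (m%:R * (1 - p)).
  apply: filterS (nbhs_infty_gtr (8 / (e ^+ 2 * (1 - p)))) => m.
  by rewrite ltr_pdivrMr ?mulr_gt0 ?exprn_gt0 ?subr_gt0 // mulrCA mulrC.
near=> m.
have large : 8 < e ^+ 2 * (m%:R * (1 - p)) by near: m.
have small : chernoff_rate p ^+ m < e by near: m.
have up := max_theta_ub hp e0 large; have lo := max_theta_lb hp m.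
by rewrite /= ltr_norml; apply/andP; split; lra.
Unshelve. all: by end_near.
Qed.
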